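(* For every integer $m\ge 2$ and every integer $i$ with $1\le i\le m-1$, $$d_i^2(m)\bigl(d_i^2(m)-d_{i-1}(m)d_{i+1}(m)\bigr)>d_{i-1}^2(m)\bigl(d_{i+1}^2(m)-d_i(m)d_{i+2}(m)\bigr).$$
   Context: For integers $m\ge 0$ and $0\le i\le m$, the Boros–Moll numbers are $$d_i(m)=2^{-2m}\sum_{k=i}^{m}2^k\binom{2m-2k}{m-k}\binom{m+k}{k}\binom{k}{i},$$ i.e. $d_i(m)$ is the coefficient of $x^i$ in $P_m(x)=2^{-2m}\sum_{k=0}^m 2^k\binom{2m-2k}{m-k}\binom{m+k}{k}(x+1)^k$. By convention $d_i(m)=0$ for $i>m$ (consistent with the formula, since $\binom{k}{i}=0$ for $k<i$). *)

From mathcomp Require Import all_boot all_order all_algebra.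
Set Implicit Arguments. Unset Strict Implicit. Unset Printing Implicit Defensive.
Import Order.TTheory GRing.Theory Num.Theory.
Local Open Scope ring_scope.

(* Boros--Moll numbers, as rationals:
   d_i(m) = 2^{-2m} sum_{k=i}^{m} 2^k C(2m-2k, m-k) C(m+k, k) C(k, i).
   For i > m the sum is empty, giving 0 (the stated convention). *)
Definition bm (m i : nat) : rat :=
  (2%:R ^+ (2 * m))^-1 *
  \sum_(i <= k < m.+1)
     (2 ^ k * 'C(2 * m - 2 * k, m - k) * 'C(m + k, k) * 'C(k, i))%N%:R.

From mathcomp Require Import all_boot all_order all_algebra.
From mathcomp Require Import ring lra zify.
Import Order.TTheory GRing.Theory Num.Theory.
Local Open Scope ring_scope.

(* For fixed m the numbers d_l = d_l(m) satisfy a three-term recurrence in l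
   (a Zeilberger-style telescoping of the defining sum).  Running it downwards
   from d_(m+1) = 0 bounds the ratio d_(i+1)/d_i between 2(m-i)/(2i+3) and
   (m-i)/(i+1).  Eliminating d_(i-1) and d_(i+2) with the recurrence, the
   difference of the two sides of the inequality, times a positive factor,
   becomes a binary quartic form in the slacks p, q >= 0 of these two bounds
   whose coefficients are polynomials in i and n = m - i with positive integer
   coefficients. *)

Lemma down_ind (m : nat) (P : nat -> Prop) :
  P m -> (forall l, (l < m)%N -> P l.+1 -> P l) -> forall l, (l <= m)%N -> P l.
Proof.
move=> Pm IH l lm; rewrite -(subKn lm).
elim: (m - l)%N (leq_subr l m) => [|k IHk] km; first by rewrite subn0.
by apply: IH; [lia | rewrite subnSK //; exact: IHk (ltnW km)].
Qed.

Definition moll_rec {R : pzRingType} (m l : nat) (x y z : R) : Prop :=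
  l.+1%:R * l.+2%:R * z + (m%:R + l%:R + 1) * (m%:R - l%:R) * x
  = l.+1%:R * (2 * m%:R + 1) * y.

(* Computed by expanding the left-hand side of [moll_quartic_identity] in p and q. *)
Definition moll_coef (k i n : nat) : nat :=
  match k with
  | 0 =>
      (648 * i ^ 2 + 2700 * i ^ 3 + 4644 * i ^ 4 + 4224 * i ^ 5 + 2144 * i ^ 6
       + 576 * i ^ 7 + 64 * i ^ 8)
    + (648 * i + 3753 * i ^ 2 + 8640 * i ^ 3 + 10272 * i ^ 4 + 6704 * i ^ 5
       + 2288 * i ^ 6 + 320 * i ^ 7) * n
    + (162 + 1863 * i + 5994 * i ^ 2 + 8922 * i ^ 3 + 6888 * i ^ 4 + 2680 * i ^ 5
       + 416 * i ^ 6) * n ^ 2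
    + (324 + 1746 * i + 3492 * i ^ 2 + 3238 * i ^ 3 + 1408 * i ^ 4 + 232 * i ^ 5) * n ^ 3
    + (162 + 531 * i + 601 * i ^ 2 + 284 * i ^ 3 + 48 * i ^ 4) * n ^ 4
  | 1 =>
      (864 * i ^ 2 + 3888 * i ^ 3 + 7200 * i ^ 4 + 7024 * i ^ 5 + 3808 * i ^ 6
       + 1088 * i ^ 7 + 128 * i ^ 8)
    + (864 * i + 5265 * i ^ 2 + 12897 * i ^ 3 + 16492 * i ^ 4 + 11764 * i ^ 5
       + 4536 * i ^ 6 + 800 * i ^ 7 + 32 * i ^ 8) * n
    + (216 + 2538 * i + 8649 * i ^ 2 + 13807 * i ^ 3 + 11584 * i ^ 4 + 4984 * i ^ 5
       + 896 * i ^ 6 + 16 * i ^ 7) * n ^ 2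
    + (432 + 2442 * i + 5217 * i ^ 2 + 5265 * i ^ 3 + 2514 * i ^ 4 + 456 * i ^ 5) * n ^ 3
    + (216 + 768 * i + 966 * i ^ 2 + 510 * i ^ 3 + 96 * i ^ 4) * n ^ 4
  | 2 =>
      (432 * i ^ 2 + 2088 * i ^ 3 + 4152 * i ^ 4 + 4344 * i ^ 5 + 2520 * i ^ 6
       + 768 * i ^ 7 + 96 * i ^ 8)
    + (432 * i + 2763 * i ^ 2 + 7176 * i ^ 3 + 9831 * i ^ 4 + 7626 * i ^ 5
       + 3288 * i ^ 6 + 696 * i ^ 7 + 48 * i ^ 8) * n
    + (108 + 1296 * i + 4659 * i ^ 2 + 7931 * i ^ 3 + 7176 * i ^ 4 + 3388 * i ^ 5
       + 696 * i ^ 6 + 24 * i ^ 7) * n ^ 2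
    + (216 + 1280 * i + 2905 * i ^ 2 + 3160 * i ^ 3 + 1649 * i ^ 4 + 330 * i ^ 5) * n ^ 3
    + (108 + 416 * i + 576 * i ^ 2 + 340 * i ^ 3 + 72 * i ^ 4) * n ^ 4
  | 3 =>
      (96 * i ^ 2 + 496 * i ^ 3 + 1056 * i ^ 4 + 1184 * i ^ 5 + 736 * i ^ 6
       + 240 * i ^ 7 + 32 * i ^ 8)
    + (96 * i + 643 * i ^ 2 + 1765 * i ^ 3 + 2581 * i ^ 4 + 2167 * i ^ 5
       + 1036 * i ^ 6 + 256 * i ^ 7 + 24 * i ^ 8) * n
    + (24 + 294 * i + 1111 * i ^ 2 + 2007 * i ^ 3 + 1945 * i ^ 4 + 999 * i ^ 5
       + 232 * i ^ 6 + 12 * i ^ 7) * n ^ 2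
    + (48 + 298 * i + 716 * i ^ 2 + 834 * i ^ 3 + 472 * i ^ 4 + 104 * i ^ 5) * n ^ 3
    + (24 + 100 * i + 152 * i ^ 2 + 100 * i ^ 3 + 24 * i ^ 4) * n ^ 4
  | _ =>
      (8 * i ^ 2 + 44 * i ^ 3 + 100 * i ^ 4 + 120 * i ^ 5 + 80 * i ^ 6 + 28 * i ^ 7
       + 4 * i ^ 8)
    + (8 * i + 56 * i ^ 2 + 162 * i ^ 3 + 252 * i ^ 4 + 228 * i ^ 5 + 120 * i ^ 6
       + 34 * i ^ 7 + 4 * i ^ 8) * n
    + (2 + 25 * i + 99 * i ^ 2 + 189 * i ^ 3 + 195 * i ^ 4 + 108 * i ^ 5
       + 28 * i ^ 6 + 2 * i ^ 7) * n ^ 2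
    + (4 + 26 * i + 66 * i ^ 2 + 82 * i ^ 3 + 50 * i ^ 4 + 12 * i ^ 5) * n ^ 3
    + (2 + 9 * i + 15 * i ^ 2 + 11 * i ^ 3 + 3 * i ^ 4) * n ^ 4
  end.

Lemma moll_coef_gt0 k i n : (0 < n)%N -> (0 < moll_coef k i n)%N.
Proof.
move=> n_gt0; case: k => [|[|[|[|k]]]]; cbv beta iota delta [moll_coef];
  by apply: ltn_addl; rewrite muln_gt0 expn_gt0 n_gt0 andbT; do 4 apply: ltn_addr.
Qed.

Definition moll_quartic {R : pzRingType} (i n : nat) (p q : R) : R :=
  (moll_coef 0 i n)%:R * q ^+ 4 + (moll_coef 1 i n)%:R * p * q ^+ 3
  + (moll_coef 2 i n)%:R * p ^+ 2 * q ^+ 2 + (moll_coef 3 i n)%:R * p ^+ 3 * q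
  + (moll_coef 4 i n)%:R * p ^+ 4.

Lemma moll_quartic_gt0 (R : realDomainType) (i n : nat) (p q : R) :
  (0 < n)%N -> 0 <= p -> 0 <= q -> 0 < p + q -> 0 < moll_quartic i n p q.
Proof.
move=> n_gt0 p_ge0 q_ge0 pq_gt0.
have c_gt0 k : 0 < (moll_coef k i n)%:R :> R by rewrite ltr0n moll_coef_gt0.
rewrite /moll_quartic; have [q0 | q_neq0] := eqVneq q 0.
  have p_gt0 : 0 < p by move: pq_gt0; rewrite q0 addr0.
  by rewrite q0 !expr0n !mulr0 !add0r mulr_gt0 ?exprn_gt0.
have q_gt0 : 0 < q by rewrite lt_def q_neq0.
rewrite -!addrA ltr_wpDr ?mulr_gt0 ?exprn_gt0 //.
by rewrite !addr_ge0 ?mulr_ge0 ?exprn_ge0 ?ler0n.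
Qed.

Lemma moll_quartic_identity (R : realFieldType) (i n : nat) (c a b e : R) :
  (0 < i)%N -> (0 < n)%N ->
  moll_rec (i + n) i.-1 c a b -> moll_rec (i + n) i a b e ->
  (n ^ 4 * ((2 * i + n) * n.+1) ^ 2 * (i.+1 * i.+2))%N%:R
    * (a ^+ 2 * (a ^+ 2 - c * b) - c ^+ 2 * (b ^+ 2 - a * e))
  = moll_quartic i n ((2 * i + 3)%:R * b - 2 * n%:R * a) (n%:R * a - i.+1%:R * b).
Proof.
case: i => [//|l] _ n_gt0; rewrite /moll_rec /= => rec_c rec_e.
have den_c : ((2 * l.+1 + n) * n.+1)%:R != 0 :> R by rewrite pnatr_eq0; lia.
have den_e : (l.+2 * l.+3)%:R != 0 :> R by rewrite pnatr_eq0.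
have cE : c = (l.+1%:R * (2 * (l.+1 + n)%:R + 1) * a - l.+1%:R * l.+2%:R * b)
              / ((2 * l.+1 + n) * n.+1)%:R.
  by apply: (canRL (mulfK den_c)); rewrite -rec_c; ring.
have eE : e = (l.+2%:R * (2 * (l.+1 + n)%:R + 1) * b
               - ((l.+1 + n)%:R + l.+1%:R + 1) * ((l.+1 + n)%:R - l.+1%:R) * a)
              / (l.+2 * l.+3)%:R.
  by apply: (canRL (mulfK den_e)); rewrite -rec_e; ring.
(* Unfold [moll_coef] only: [simpl] would expand its large numerals in unary. *)
rewrite cE eE /moll_quartic; cbv beta iota delta [moll_coef].
field.
have l_ge0 := ler0n R l; have n_ge0 := ler0n R n.
by apply/and4P; split; apply: lt0r_neq0; lra.
Qed.

Section MollRecurrence.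

Variables (R : realFieldType) (m : nat) (d : nat -> R).
Hypotheses (d_ge0 : forall l, 0 <= d l) (d_succ_eq0 : d m.+1 = 0).
Hypothesis d_rec : forall l, moll_rec m l (d l) (d l.+1) (d l.+2).

(* Both bounds go down from l = m: multiplying the bound at l by m + l + 1 and
   substituting the recurrence leaves the bound at l + 1. *)
Lemma moll_ratio_upper l : (l <= m)%N -> l.+1%:R * d l.+1 <= (m%:R - l%:R) * d l.
Proof.
move: l; apply: down_ind => [|l lm IH]; first by rewrite d_succ_eq0 subrr !mulr0 mul0r.
have rec := d_rec l; have d1_ge0 := d_ge0 l.+1; have l_ge0 := ler0n R l.
have l1m : l.+1%:R <= m%:R :> R by rewrite ler_nat.
rewrite /moll_rec -!natr1 in rec IH l1m *; nra.
Qed.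

Lemma moll_ratio_lower l :
  (l <= m)%N -> 2 * (m%:R - l%:R) * d l <= (2 * l%:R + 3) * d l.+1.
Proof.
move: l; apply: down_ind => [|l lm IH]; first by rewrite d_succ_eq0 subrr !mulr0 mul0r.
have rec := d_rec l; have d1_ge0 := d_ge0 l.+1; have d2_ge0 := d_ge0 l.+2.
have l_ge0 := ler0n R l; have l1m : l.+1%:R <= m%:R :> R by rewrite ler_nat.
rewrite /moll_rec -!natr1 in rec IH l1m *; nra.
Qed.

Lemma moll_quartic_ineq i : (0 < i < m)%N -> 0 < d i ->
  d i.-1 ^+ 2 * (d i.+1 ^+ 2 - d i * d i.+2) < d i ^+ 2 * (d i ^+ 2 - d i.-1 * d i.+1).
Proof.
move=> /andP[i_gt0 im] di_gt0.
have [n n_gt0 mE] : exists2 n, (0 < n)%N & m = (i + n)%N by exists (m - i)%N; lia.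
have nE : m%:R - i%:R = n%:R :> R by rewrite mE natrD addrC addKr.
have rec_c : moll_rec (i + n) i.-1 (d i.-1) (d i) (d i.+1).
  by have := d_rec i.-1; rewrite prednK // mE.
have rec_e : moll_rec (i + n) i (d i) (d i.+1) (d i.+2) by rewrite -mE.
set p := (2 * i + 3)%:R * d i.+1 - 2 * n%:R * d i.
set q := n%:R * d i - i.+1%:R * d i.+1.
have q_ge0 : 0 <= q by rewrite subr_ge0 -nE moll_ratio_upper // ltnW.
have p_ge0 : 0 <= p by rewrite subr_ge0 -nE natrD natrM moll_ratio_lower // ltnW.
have pq_gt0 : 0 < p + q.
  have pqE : i.+1%:R * p + (2 * i + 3)%:R * q = n%:R * d i by rewrite /p /q; ring.
  have : 0 < n%:R * d i by rewrite mulr_gt0 ?ltr0n.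
  have := ler0n R i; rewrite -pqE; nra.
have W_gt0 : 0 < (n ^ 4 * ((2 * i + n) * n.+1) ^ 2 * (i.+1 * i.+2))%N%:R :> R.
  by rewrite ltr0n !muln_gt0 ?expn_gt0; lia.
rewrite -subr_gt0 -(pmulr_rgt0 _ W_gt0) moll_quartic_identity //.
exact: moll_quartic_gt0.
Qed.

End MollRecurrence.

Definition bm_weight (m k : nat) : rat :=
  (2 ^ k * 'C(2 * m - 2 * k, m - k) * 'C(m + k, k))%N%:R.

Definition bm_sum (m l : nat) : rat :=
  \sum_(0 <= k < m.+1) bm_weight m k * 'C(k, l)%:R.

Lemma bmE m l : bm m l = (2%:R ^+ (2 * m))^-1 * bm_sum m l.
Proof.
rewrite /bm /bm_sum; congr (_ * _).
case: (leqP l m.+1) => [lm | ml].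
  rewrite [RHS](big_cat_nat (leq0n l) lm) /= [X in X + _]big1_seq ?add0r.
    by apply: eq_bigr => k _; rewrite /bm_weight !natrM.
  by move=> k; rewrite mem_index_iota => /andP[_ kl]; rewrite bin_small ?mulr0.
rewrite big_geq ?(ltnW ml) // big1_seq // => k.
by rewrite mem_index_iota => /andP[_ km]; rewrite bin_small ?mulr0 //; lia.
Qed.

Lemma natr_mul_bin_left (R : pzRingType) k l :
  l.+1%:R * 'C(k, l.+1)%:R = (k%:R - l%:R) * 'C(k, l)%:R :> R.
Proof.
rewrite -natrM mul_bin_left natrM.
by case: (leqP l k) => [lk | kl]; [rewrite natrB | rewrite bin_small ?mulr0].
Qed.

Lemma natr_mul_bin_down (R : pzRingType) k l :
  (k.+1%:R - l%:R) * 'C(k.+1, l)%:R = k.+1%:R * 'C(k, l)%:R :> R.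
Proof.
case: (leqP l k.+1) => [lk | kl]; last by rewrite !bin_small ?mulr0 //; lia.
by rewrite -natrB // -!natrM -mul_bin_down.
Qed.

Lemma mul_bin_center_succ r :
  ('C((2 * r).+2, r.+1) * r.+1 = 2 * (2 * r).+1 * 'C(2 * r, r))%N.
Proof.
have sym : 'C((2 * r).+1, r.+1) = 'C((2 * r).+1, r).
  by rewrite -[RHS]bin_sub ?leqW ?leq_pmull // (_ : (2 * r).+1 - r = r.+1)%N //; lia.
rewrite mulnC -(mul_bin_diag (2 * r).+2) /= -sym -mulnA (mul_bin_diag (2 * r).+1) /=.
ring.
Qed.

Lemma bm_weight_succ m k : (k < m)%N ->
  bm_weight m k.+1 * ((2 * m%:R - 2 * k%:R - 1) * k.+1%:R)
  = bm_weight m k * ((m%:R - k%:R) * (m%:R + k%:R + 1)).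
Proof.
move=> km; have [r ->] : exists r, m = (k + r.+1)%N by exists (m - k.+1)%N; lia.
rewrite /bm_weight.
have -> : (2 * (k + r.+1) - 2 * k.+1 = 2 * r)%N by lia.
have -> : (k + r.+1 - k.+1 = r)%N by lia.
have -> : (2 * (k + r.+1) - 2 * k = (2 * r).+2)%N by lia.
have -> : (k + r.+1 - k = r.+1)%N by lia.
have -> : 2 * (k + r.+1)%:R - 2 * k%:R - 1 = (2 * r).+1%:R :> rat by ring.
have -> : (k + r.+1)%:R - k%:R = r.+1%:R :> rat by ring.
have -> : (k + r.+1)%:R + k%:R + 1 = (k + r.+1 + k).+1%:R :> rat by ring.
rewrite addnS -!natrM; congr _%:R.
transitivity (2 ^ k * (2 * (2 * r).+1 * 'C(2 * r, r))
              * (k.+1 * 'C((k + r.+1 + k).+1, k.+1)))%N; first by rewrite expnS; ring.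
rewrite -mul_bin_center_succ -(mul_bin_diag (k + r.+1 + k).+1) /=; ring.
Qed.

Lemma bm_sum_rec m l : moll_rec m l (bm_sum m l) (bm_sum m l.+1) (bm_sum m l.+2).
Proof.
pose h k := bm_weight m k * 'C(k, l)%:R.
pose F k : rat :=
  (m%:R - k%:R) * (m%:R + k%:R + 1) - (2 * m%:R - 2 * k%:R + 1) * (k%:R - l%:R).
(* [G] is a Zeilberger certificate for the recurrence. *)
pose G k := (2 * m%:R - 2 * k%:R + 1) * (k%:R - l%:R) * h k.
have termE k : l.+1%:R * l.+2%:R * (bm_weight m k * 'C(k, l.+2)%:R)
    + (m%:R + l%:R + 1) * (m%:R - l%:R) * (bm_weight m k * 'C(k, l)%:R)
    - l.+1%:R * (2 * m%:R + 1) * (bm_weight m k * 'C(k, l.+1)%:R) = h k * F k.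
  have l1_neq0 : l.+1%:R != 0 :> rat by rewrite pnatr_eq0.
  have l2_neq0 : l.+2%:R != 0 :> rat by rewrite pnatr_eq0.
  have C1 : 'C(k, l.+1)%:R = (k%:R - l%:R) * 'C(k, l)%:R / l.+1%:R :> rat.
    by rewrite -natr_mul_bin_left [_ * 'C(_, _)%:R]mulrC mulfK.
  have C2 : 'C(k, l.+2)%:R = (k%:R - l.+1%:R) * 'C(k, l.+1)%:R / l.+2%:R :> rat.
    by rewrite -natr_mul_bin_left [_ * 'C(_, _)%:R]mulrC mulfK.
  rewrite C2 C1 /h /F; field.
  have l_ge0 := ler0n rat l.
  by apply/andP; split; apply: lt0r_neq0; lra.
have telescope k : (0 <= k < m)%N -> h k * F k = G k.+1 - G k.
  move=> /andP[_ km].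
  have G_succ : G k.+1
      = bm_weight m k.+1 * ((2 * m%:R - 2 * k%:R - 1) * k.+1%:R) * 'C(k, l)%:R.
    rewrite /G /h; transitivity ((2 * m%:R - 2 * k.+1%:R + 1) * bm_weight m k.+1
      * ((k.+1%:R - l%:R) * 'C(k.+1, l)%:R)); first by ring.
    rewrite natr_mul_bin_down; ring.
  rewrite G_succ bm_weight_succ // /G /h /F; ring.
have G0 : G 0%N = 0.
  rewrite /G /h; case: l {termE telescope h F G} => [|l].
    by rewrite subrr mulr0 mul0r.
  by rewrite bin_small ?mulr0.
have sum_hF : \sum_(0 <= k < m.+1) h k * F k = 0.
  rewrite big_nat_recr //= (telescope_sumr_eq _ _ (leq0n m) telescope) G0 /G /h /F; ring.
apply/eqP; rewrite -subr_eq0 -sum_hF -(eq_bigr _ (fun k _ => termE k)) /bm_sum.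
by rewrite !sumrB !mulr_sumr big_split.
Qed.

Lemma bm_rec m l : moll_rec m l (bm m l) (bm m l.+1) (bm m l.+2).
Proof.
by rewrite /moll_rec !bmE !(mulrCA _ (_^-1)) -mulrDr bm_sum_rec.
Qed.

Lemma bm_ge0 m l : 0 <= bm m l.
Proof.
rewrite /bm mulr_ge0 ?invr_ge0 ?exprn_ge0 //.
by apply: sumr_ge0 => k _; rewrite ler0n.
Qed.

Lemma bm_gt0 m l : (l <= m)%N -> 0 < bm m l.
Proof.
move=> lm; rewrite /bm mulr_gt0 ?invr_gt0 ?exprn_gt0 // big_nat_recr //=.
rewrite ltr_wpDl //; first by apply: sumr_ge0 => k _; rewrite ler0n.
by rewrite ltr0n !muln_gt0 expn_gt0 !bin_gt0 lm leq_addr subnn.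
Qed.

Lemma bm_succ_eq0 m : bm m m.+1 = 0.
Proof. by rewrite /bm big_geq // mulr0. Qed.

Theorem theorem1p1 (m i : nat) :
  (2 <= m)%N -> (1 <= i)%N -> (i <= m - 1)%N ->
  bm m i ^+ 2 * (bm m i ^+ 2 - bm m i.-1 * bm m i.+1) >
  bm m i.-1 ^+ 2 * (bm m i.+1 ^+ 2 - bm m i * bm m i.+2).
Proof.
move=> m_ge2 i_ge1 im.
have i_range : (0 < i < m)%N by apply/andP; split; lia.
apply: (@moll_quartic_ineq _ m (bm m) (bm_ge0 m) (bm_succ_eq0 m) (bm_rec m) _ i_range).
by rewrite bm_gt0 //; lia.
Qed.
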